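(* Let $N\ge1$, $r_i>0$, $S_u=\bigsqcup_{i=1}^N\{i\}\times[0,r_i]$, $p_i,q_i\in[0,1]$, $c_i,d_i>0$, and $\mathfrak p_{i,1},\mathfrak p_{i,2}$ ($i=1,\dots,N$) Borel sub-probability measures on $S_u$. Let $A$ be the operator $(Af)_i=\tfrac12 f_i''$ on the domain of $f=\sum_if_i\in C(S_u)$ with $f_i\in C^2[0,r_i]$ and $$p_if_i''(0)-(1-p_i)f_i'(0)+c_if_i(0)=c_i\int f\,\mathrm d\mathfrak p_{i,1},\qquad q_if_i''(r_i)+(1-q_i)f_i'(r_i)+d_if_i(r_i)=d_i\int f\,\mathrm d\mathfrak p_{i,2}.$$ Let $R^{co}_\lambda$, $\lambda>0$, be the Feller resolvent on $C(S_u)$ of the concatenation, by means of the measures $\mathfrak p_{i,j}$, of the processes generated by the operators $A_i f=\tfrac12f''$ on $C[0,r_i]$ with domains $\{f\in C^2[0,r_i]: p_if''(0)-(1-p_i)f'(0)+c_if(0)=0,\ q_if''(r_i)+(1-q_i)f'(r_i)+d_if(r_i)=0\}$. Then $A$ coincides with the generator $A^{co}$ of the Feller semigroup whose resolvent is $R^{co}_\lambda$, $\lambda>0$; in particular $A$ is a Feller generator.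
   Context: For $\lambda>0$, $s=\sqrt{2\lambda}$, set $a^i_{1,1}=2\lambda p_i-s(1-p_i)+c_i$, $a^i_{1,2}=2\lambda p_i+s(1-p_i)+c_i$, $a^i_{2,1}=e^{sr_i}(2\lambda q_i+s(1-q_i)+d_i)$, $a^i_{2,2}=e^{-sr_i}(2\lambda q_i-s(1-q_i)+d_i)$, $W_i=a^i_{1,1}a^i_{2,2}-a^i_{1,2}a^i_{2,1}$, $\ell^{i,1}_\lambda(x)=\frac{c_i}{W_i}(a^i_{2,2}e^{sx}-a^i_{2,1}e^{-sx})$, $\ell^{i,2}_\lambda(x)=\frac{d_i}{W_i}(a^i_{1,1}e^{-sx}-a^i_{1,2}e^{sx})$ on $[0,r_i]$, zero elsewhere. With $R_{\lambda,i}=(\lambda-A_i)^{-1}$ and $R^{du}_\lambda g=\sum_iR_{\lambda,i}g_i$, the concatenation resolvent is $R^{co}_\lambda g=R^{du}_\lambda g+\sum_{i}\sum_{j=1}^2u_{i,j}\ell^{i,j}_\lambda$, where $(u_{i,j})$ is the unique solution of $u_{i,j}=\int R^{du}_\lambda g\,\mathrm d\mathfrak p_{i,j}+\sum_{k,l}u_{k,l}\int\ell^{k,l}_\lambda\,\mathrm d\mathfrak p_{i,j}$. A Feller semigroup is a strongly continuous semigroup of positive contractions with $T(0)=I$, not necessarily conservative. *)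

From HB Require Import structures.
From mathcomp Require Import all_boot all_order all_algebra.
From mathcomp Require Import all_classical all_reals all_analysis.
From Stdlib Require Import ClassicalEpsilon.
Set Implicit Arguments. Unset Strict Implicit. Unset Printing Implicit Defensive.
Import Order.TTheory GRing.Theory Num.Theory.
Import numFieldNormedType.Exports.
Local Open Scope classical_set_scope.
Local Open Scope ring_scope.

(* A function on S_u = disjoint union of {i} x [0, r_i] (i < N) is
   represented as f : 'I_N -> R -> R; only the values f i x for
   x in [0, r i] matter.  A Borel measure on S_u is represented as a family
   (mu k)_{k < N} of Borel measures on R, mu k carried by [0, r k]. *)

Section Defs.
Variable R : realType.
Variable N : nat.
Variable r : 'I_N -> R.

(* f belongs to C^2[a,b] with first/second derivative f1, f2
   (one-sided at the end points, obtained by continuity). *)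
Definition C2_on (a b : R) (f f1 f2 : R -> R) : Prop :=
  [/\ {within `[a, b], continuous f},
      {within `[a, b], continuous f1},
      {within `[a, b], continuous f2},
      (forall x, a < x < b -> is_derive x 1 f (f1 x)) &
      (forall x, a < x < b -> is_derive x 1 f1 (f2 x))].

Definition contS (f : 'I_N -> R -> R) : Prop :=
  forall i, {within `[0, r i], continuous (f i)}.

Definition intS (mu : 'I_N -> {measure set R -> \bar R})
  (f : 'I_N -> R -> R) : R :=
  \sum_(k < N) Rintegral (mu k) `[0, r k] (f k).

Definition subprobS (mu : 'I_N -> {measure set R -> \bar R}) : Prop :=
  (forall k, mu k (~` `[0, r k]) = 0%E) /\
  (\sum_(k < N) mu k setT <= 1)%E.

Variables (p q c d : 'I_N -> R).
Variable P : 'I_N -> 'I_2 -> 'I_N -> {measure set R -> \bar R}.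
(* P i ord0 = p_{i,1}, P i ord1 = p_{i,2} *)

Definition graphA (f h : 'I_N -> R -> R) : Prop :=
  forall i, exists f1 f2 : R -> R,
    [/\ C2_on 0 (r i) (f i) f1 f2,
        p i * f2 0 - (1 - p i) * f1 0 + c i * f i 0
          = c i * intS (P i ord0) f,
        q i * f2 (r i) + (1 - q i) * f1 (r i) + d i * f i (r i)
          = d i * intS (P i ord_max) f &
        forall x, x \in `[0, r i] -> h i x = f2 x / 2].

Definition graphAi (i : 'I_N) (f h : R -> R) : Prop :=
  exists f1 f2 : R -> R,
    [/\ C2_on 0 (r i) f f1 f2,
        p i * f2 0 - (1 - p i) * f1 0 + c i * f 0 = 0,
        q i * f2 (r i) + (1 - q i) * f1 (r i) + d i * f (r i) = 0 &
        forall x, x \in `[0, r i] -> h x = f2 x / 2].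

Definition is_resolvent_i (l : R) (i : 'I_N) (Rl : (R -> R) -> R -> R) : Prop :=
  (forall g, {within `[0, r i], continuous g} ->
     graphAi i (Rl g) (fun x => l * Rl g x - g x)) /\
  (forall f h, graphAi i f h -> forall g,
     (forall x, x \in `[0, r i] -> g x = l * f x - h x) ->
     forall x, x \in `[0, r i] -> Rl g x = f x).

Definition ell (l : R) (i : 'I_N) (j : 'I_2) (x : R) : R :=
  let s := Num.sqrt (2 * l) in
  let a11 := 2 * l * p i - s * (1 - p i) + c i in
  let a12 := 2 * l * p i + s * (1 - p i) + c i in
  let a21 := expR (s * r i) * (2 * l * q i + s * (1 - q i) + d i) in
  let a22 := expR (- (s * r i)) * (2 * l * q i - s * (1 - q i) + d i) in
  let W := a11 * a22 - a12 * a21 in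
  if j == ord0 then c i / W * (a22 * expR (s * x) - a21 * expR (- (s * x)))
  else d i / W * (a11 * expR (- (s * x)) - a12 * expR (s * x)).

Definition ellS (l : R) (i : 'I_N) (j : 'I_2) : 'I_N -> R -> R :=
  fun k x => if k == i then ell l i j x else 0.

Variable Rr : R -> 'I_N -> (R -> R) -> R -> R.

Definition Rdu (l : R) (g : 'I_N -> R -> R) : 'I_N -> R -> R :=
  fun i => Rr l i (g i).

Definition coeff_system (l : R) (g : 'I_N -> R -> R) (u : 'I_N -> 'I_2 -> R) :=
  forall i j, u i j = intS (P i j) (Rdu l g)
                      + \sum_(k < N) \sum_(m < 2) u k m * intS (P i j) (ellS l k m).

Definition coeff (l : R) (g : 'I_N -> R -> R) : 'I_N -> 'I_2 -> R :=
  epsilon (inhabits (fun _ _ => 0)) (coeff_system l g).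

Definition Rco (l : R) (g : 'I_N -> R -> R) : 'I_N -> R -> R :=
  fun k x => Rdu l g k x
             + \sum_(i < N) \sum_(j < 2) coeff l g i j * ellS l i j k x.

End Defs.

(* Each ell^{i,j} is a combination of exp(s x) and exp(-s x), so ell'' = 2 l ell, and it
   satisfies the boundary conditions of A_i with right-hand side c_i (j = 1) at 0 or d_i
   (j = 2) at r_i, and the homogeneous one at the other end.  Adding sum_j u_ij ell^{i,j} to a
   function on edge i therefore shifts its two boundary values by c_i u_i1 and d_i u_i2
   without changing l f - f''/2.  Hence R^co g is in D(A) with (l - A) R^co g = g exactly
   when u_ij = int R^co g dp_ij, which is the linear system defining u; conversely, for f in
   D(A) the function f - sum_j (int f dp_ij) ell^{i,j} lies in D(A_i) and equals
   R_{l,i}(l f - A f), so the integrals of f solve the same system.  The system is uniquely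
   solvable because its matrix (int ell^{k,m} dp_ij) is nonnegative with row sums < 1: on
   [0, r_i], ell^{i,1} + ell^{i,2} = P y + Q / y with y = exp(s x) in [1, exp(s r_i)] is
   bounded by the larger of its end values and 0, both end values are < 1, and the p_ij
   are sub-probabilities. *)

From Pilot Require Import Defs.
From mathcomp Require Import all_boot all_order all_algebra.
From mathcomp Require Import all_classical all_reals all_analysis.
From mathcomp Require Import ring lra measurable_realfun.
From Stdlib Require Import ClassicalEpsilon.
Import Order.TTheory GRing.Theory Num.Theory.
Import numFieldNormedType.Exports.
Local Open Scope classical_set_scope.
Local Open Scope ring_scope.

Section ExpSum.
Context {R : realType}.

Definition expsum (s A B x : R) := A * expR (s * x) + B * expR (- (s * x)).

Lemma is_derive_expsum (s A B x : R) :
  is_derive x 1 (expsum s A B) (expsum s (s * A) (- (s * B)) x).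
Proof.
have dexp k : is_derive x 1 (fun z => expR (k * z)) (k * expR (k * x)).
  have dlin : is_derive x 1 (fun z : R => k * z) k.
    by rewrite -[k in is_derive _ _ _ k]mulr1; exact: is_deriveZ.
  by rewrite mulrC; exact: (is_derive1_comp (is_derive_expR (k * x)) dlin).
have -> : expsum s A B = A \*: (fun z => expR (s * z)) + B \*: (fun z => expR (- s * z)).
  by apply/funext => z; rewrite /expsum -mulNr.
have -> : expsum s (s * A) (- (s * B)) x
    = A *: (s * expR (s * x)) + B *: (- s * expR (- s * x)).
  by rewrite /expsum /GRing.scale /= !mulNr; ring.
exact: is_deriveD (is_deriveZ _ (dexp s)) (is_deriveZ _ (dexp (- s))).
Qed.

Lemma continuous_expsum (s A B : R) : continuous (expsum s A B).
Proof.
move=> x; apply: differentiable_continuous; apply/derivable1_diffP.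
by have [] := is_derive_expsum s A B x.
Qed.

Lemma C2_on_expsum (a b s A B : R) :
  C2_on a b (expsum s A B) (expsum s (s * A) (- (s * B)))
    (fun x => s ^+ 2 * expsum s A B x).
Proof.
have -> : (fun x => s ^+ 2 * expsum s A B x)
    = expsum s (s * (s * A)) (- (s * - (s * B))).
  by apply/funext => x; rewrite /expsum; ring.
split; try by move=> x _; exact: is_derive_expsum.
all: exact/continuous_subspaceT/continuous_expsum.
Qed.

End ExpSum.

Lemma within_continuous_mull {R : realType} (A : set R) (k : R) (f : R -> R) :
  {within A, continuous f} -> {within A, continuous (fun x => k * f x)}.
Proof.
move=> cf; apply: (@within_continuous_comp _ _ _ _ _ ( *%R k)) => // y _.
exact: mulrl_continuous.
Qed.

Section C2Algebra.
Context {R : realType} {a b : R}.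

Lemma C2_onD {f f1 f2 g g1 g2 : R -> R} :
  C2_on a b f f1 f2 -> C2_on a b g g1 g2 ->
  C2_on a b (fun x => f x + g x) (fun x => f1 x + g1 x) (fun x => f2 x + g2 x).
Proof.
case=> cf cf1 cf2 df df1 [cg cg1 cg2 dg dg1].
split; try exact: within_continuousD.
- by move=> x xab; exact: is_deriveD (df x xab) (dg x xab).
- by move=> x xab; exact: is_deriveD (df1 x xab) (dg1 x xab).
Qed.

Lemma C2_onZ (k : R) {f f1 f2 : R -> R} :
  C2_on a b f f1 f2 ->
  C2_on a b (fun x => k * f x) (fun x => k * f1 x) (fun x => k * f2 x).
Proof.
case=> cf cf1 cf2 df df1; split; try exact: within_continuous_mull.
- by move=> x xab; exact: is_deriveZ (df x xab).
- by move=> x xab; exact: is_deriveZ (df1 x xab).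
Qed.

End C2Algebra.

Lemma continuous_itv_integrable {R : realType} (mu : {measure set R -> \bar R})
    (a b : R) (f : R -> R) :
  (mu `[a, b]%classic < +oo)%E -> {within `[a, b], continuous f} ->
  mu.-integrable `[a, b] (EFin \o f).
Proof.
move=> fin cf; apply: measurable_bounded_integrable => //.
  exact: subspace_continuous_measurable_fun.
have /compact_bounded[M [_ Mf]] := continuous_compact cf (@segment_compact _ a b).
by exists M; split; rewrite ?num_real // => ? ? ? ?; exact: Mf.
Qed.

Lemma big_ord2 {R : nmodType} (F : 'I_2 -> R) : \sum_(j < 2) F j = F ord0 + F ord_max.
Proof. by rewrite big_ord_recr big_ord1; congr (F _ + _); exact: val_inj. Qed.

Lemma eq_intS {R : realType} {N : nat} (r : 'I_N -> R)
    (mu : 'I_N -> {measure set R -> \bar R}) (f g : 'I_N -> R -> R) :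
  (forall k x, x \in `[0, r k] -> f k x = g k x) -> Defs.intS r mu f = Defs.intS r mu g.
Proof.
move=> fg; apply: eq_bigr => k _; apply: eq_Rintegral => x.
by rewrite inE => /fg->.
Qed.

Section SubProbability.
Context {R : realType} {N : nat} {r : 'I_N -> R} {mu : 'I_N -> {measure set R -> \bar R}}.
Hypothesis mu_subprob : subprobS r mu.

Let itv_le_setT k : (mu k `[0%R, r k]%classic <= mu k setT)%E.
Proof. by apply: le_measure; rewrite ?inE. Qed.

Lemma subprobS_itv_finite k : (mu k `[0%R, r k]%classic < +oo)%E.
Proof.
have [_ mu1] := mu_subprob.
apply: (le_lt_trans (itv_le_setT k)); apply: (le_lt_trans _ (ltry 1)).
by apply/(le_trans _ mu1); rewrite (bigD1 k) //= leeDl // sume_ge0.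
Qed.

Lemma subprobS_itv_mass_le1 : \sum_(k < N) fine (mu k `[0%R, r k]%classic) <= 1.
Proof.
have [_ mu1] := mu_subprob; rewrite -lee_fin -sumEFin; apply/(le_trans _ mu1).
apply: lee_sum => k _.
by rewrite fineK ?itv_le_setT // ge0_fin_numE ?measure_ge0 ?subprobS_itv_finite.
Qed.

Lemma subprobS_integrable k (f : R -> R) : {within `[0, r k], continuous f} ->
  (mu k).-integrable `[0, r k] (EFin \o f).
Proof. exact/continuous_itv_integrable/subprobS_itv_finite. Qed.

End SubProbability.

Section FiniteFixpoint.
Context {R : realFieldType} {T : finType} (M : T -> T -> R).

Lemma substochastic_fixpoint_eq0 (v : T -> R) :
  (forall t s, 0 <= M t s) -> (forall t, \sum_s M t s < 1) ->
  (forall t, v t = \sum_s M t s * v s) -> forall t, v t = 0.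
Proof.
move=> M0 M1 hv t.
have [t0 _ t0max] := @arg_maxP _ _ T t predT (fun s => `|v s|) isT.
have : `|v t0| <= (\sum_s M t0 s) * `|v t0|.
  rewrite {1}hv mulr_suml; apply: le_trans (ler_norm_sum _ _ _) _.
  apply: ler_sum => s _; rewrite normrM ger0_norm //.
  by apply: ler_wpM2l => //; exact: t0max.
rewrite -subr_le0 -[X in X - _]mul1r -mulrBl pmulr_rle0 ?subr_gt0 // => vt0.
by apply/normr0_eq0/eqP; rewrite eq_le normr_ge0 andbT (le_trans (t0max t isT)).
Qed.

Lemma affine_fixpoint_exists (b : T -> R) :
  (forall v, (forall t, v t = \sum_s M t s * v s) -> forall t, v t = 0) ->
  exists u, forall t, u t = b t + \sum_s M t s * u s.
Proof.
(* v |-> v - M v is injective, so its matrix in the basis enumerating T is invertible *)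
move=> Mker; set n := #|T|.
have sumT (F : T -> R) : \sum_s F s = \sum_(i < n) F (enum_val i).
  rewrite (reindex (@enum_val T (mem T))) //=.
  by exists enum_rank => x _; [exact: enum_valK | exact: enum_rankK].
pose A : 'M[R]_n := \matrix_(i, j) ((i == j)%:R - M (enum_val j) (enum_val i)).
have mulA (v : 'rV[R]_n) t :
    (v *m A) 0 (enum_rank t) = v 0 (enum_rank t) - \sum_s M t s * v 0 (enum_rank s).
  rewrite mxE sumT; under eq_bigr do rewrite mxE mulrBr.
  rewrite sumrB; congr (_ - _).
    rewrite (bigD1 (enum_rank t)) //= eqxx mulr1 big1 ?addr0 // => i /negbTE->.
    exact: mulr0.
  by apply: eq_bigr => i _; rewrite enum_rankK enum_valK mulrC.
have A_unit : A \in unitmx.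
  rewrite unitmxE unitfE; apply/negP => /det0P[v /negP v_neq0 vA0].
  apply: v_neq0; apply/eqP/matrixP => i j; rewrite ord1 mxE -(enum_valK j).
  apply: (Mker (fun t => v 0 (enum_rank t))) => t; apply/eqP.
  by rewrite -subr_eq0 -mulA vA0 mxE.
pose u := \row_i b (enum_val i) *m invmx A.
exists (fun t => u 0 (enum_rank t)) => t.
by apply/eqP; rewrite -subr_eq -mulA mulmxKV // mxE enum_rankK.
Qed.

End FiniteFixpoint.

Lemma hyperbola_le_max_endpoints {R : realFieldType} (P Q E y : R) :
  1 <= y <= E ->
  P * y + Q / y <= Num.max (Num.max (P + Q) (P * E + Q / E)) 0.
Proof.
case/andP=> y1 yE; have y0 : 0 < y by lra.
set M := Num.max _ _.
have M1 : P + Q <= M by rewrite !le_max lexx.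
have ME : P * E + Q / E <= M by rewrite !le_max lexx orbT.
have M0 : 0 <= M by rewrite le_max lexx orbT.
have [Q0|Q0] := lerP 0 Q.
  have [E1|E1] := eqVneq E 1.
    have -> : y = 1 by lra.
    by rewrite mulr1 divr1.
  have E1' : 1 < E by rewrite lt_neqAle eq_sym E1; lra.
  (* for Q >= 0 the map is convex in y, so it lies below its chord *)
  have chord : (E - 1) * (P * y + Q / y)
      <= (E - y) * (P + Q) + (y - 1) * (P * E + Q / E).
    rewrite -subr_ge0.
    have -> : (E - y) * (P + Q) + (y - 1) * (P * E + Q / E)
        - (E - 1) * (P * y + Q / y) = Q * ((y - 1) * (E - 1) * (E - y)) / (y * E).
      by field; rewrite !gt_eqF //; lra.
    apply: divr_ge0; last by apply: mulr_ge0; lra.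
    by apply: mulr_ge0 => //; apply: mulr_ge0; [apply: mulr_ge0|]; lra.
  rewrite -(ler_pM2l (_ : 0 < E - 1)); last lra.
  by apply: (le_trans chord); nra.
have [P0|P0] := lerP 0 P.
  have Py : P * y <= P * E by apply: ler_wpM2l.
  have Qy : Q / y <= Q / E.
    rewrite -subr_ge0.
    have -> : Q / E - Q / y = (- Q) * (E - y) / (y * E) by field; rewrite !gt_eqF //; lra.
    by apply: divr_ge0; apply: mulr_ge0; lra.
  lra.
have : Q / y < 0 by rewrite pmulr_llt0 ?invr_gt0.
nra.
Qed.

Section BoundaryOperators.
Context {R : realType} {N : nat} (r p q c d : 'I_N -> R).

Definition left_bc (i : 'I_N) (f f1 f2 : R -> R) :=
  p i * f2 0 - (1 - p i) * f1 0 + c i * f 0.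

Definition right_bc (i : 'I_N) (f f1 f2 : R -> R) :=
  q i * f2 (r i) + (1 - q i) * f1 (r i) + d i * f (r i).

End BoundaryOperators.

Section Edge.
Context {R : realType} {N : nat} {r p q c d : 'I_N -> R} {l : R} {i : 'I_N}.
Hypotheses (l_gt0 : 0 < l) (r_gt0 : 0 < r i) (p01 : 0 <= p i <= 1)
  (q01 : 0 <= q i <= 1) (c_gt0 : 0 < c i) (d_gt0 : 0 < d i).

Local Notation ell := (ell r p q c d l i).

(* a^i_{2,1} = E * b1 and a^i_{2,2} = E^-1 * b2 in the notation of ell *)
Let s := Num.sqrt (2 * l).
Let E := expR (s * r i).
Let a11 := 2 * l * p i - s * (1 - p i) + c i.
Let a12 := 2 * l * p i + s * (1 - p i) + c i.
Let b1 := 2 * l * q i + s * (1 - q i) + d i.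
Let b2 := 2 * l * q i - s * (1 - q i) + d i.
Let W := a11 * (E^-1 * b2) - a12 * (E * b1).

Let s_gt0 : 0 < s. Proof. by rewrite sqrtr_gt0 mulr_gt0. Qed.
Let E_gt1 : 1 < E. Proof. by rewrite expR_gt1 mulr_gt0. Qed.

Let W_lt0 : W < 0.
Proof.
move: l_gt0 c_gt0 d_gt0 p01 q01 s_gt0 E_gt1 => l0 c0 d0 /andP[p0 p1] /andP[q0 q1] s0 E1.
have sp : 0 <= s * (1 - p i) by apply: mulr_ge0; lra.
have sq : 0 <= s * (1 - q i) by apply: mulr_ge0; lra.
have lp : 0 <= l * p i by apply: mulr_ge0; lra.
have lq : 0 <= l * q i by apply: mulr_ge0; lra.
have a_le : 0 <= a12 - a11 by rewrite /a11 /a12; lra.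
have a_gt0 : 0 < a12 + a11 by rewrite /a11 /a12; lra.
have b_le : 0 <= b1 - b2 by rewrite /b1 /b2; lra.
have b_gt0 : 0 < b1 + b2 by rewrite /b1 /b2; lra.
have ab_le : a11 * b2 <= a12 * b1.
  have := mulr_ge0 a_le (ltW b_gt0); have := mulr_ge0 (ltW a_gt0) b_le; nra.
have ab_gt0 : 0 < a12 * b1 by apply: mulr_gt0; rewrite /a12 /b1; lra.
have -> : W = (a11 * b2 - a12 * b1 * E ^+ 2) / E by rewrite /W; field; lra.
rewrite pmulr_llt0 ?invr_gt0; last lra.
have : 0 < a12 * b1 * (E ^+ 2 - 1) by apply: mulr_gt0 => //; nra.
nra.
Qed.

Definition ellA (j : 'I_2) : R :=
  if j == ord0 then c i / W * (E^-1 * b2) else - (d i / W * a12).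
Definition ellB (j : 'I_2) : R :=
  if j == ord0 then - (c i / W * (E * b1)) else d i / W * a11.

Lemma ellE j : ell j = expsum s (ellA j) (ellB j).
Proof.
apply/funext => x; rewrite /Defs.ell /expsum /ellA /ellB /= -/s !expRN -/E.
by case: (j == ord0); rewrite /W /a11 /a12 /b1 /b2; ring.
Qed.

Let W_neq0 : W != 0. Proof. exact: ltr0_neq0. Qed.
Let E_neq0 : E != 0. Proof. by rewrite gt_eqF ?expR_gt0. Qed.

Lemma continuous_ell j : continuous (ell j).
Proof. by rewrite ellE; exact: continuous_expsum. Qed.

Definition ell_deriv (j : 'I_2) := expsum s (s * ellA j) (- (s * ellB j)).

Lemma C2_on_ell j a b : C2_on a b (ell j) (ell_deriv j) (fun x => 2 * l * ell j x).
Proof.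
by rewrite ellE -(sqr_sqrtr (ltW (mulr_gt0 _ l_gt0))) //; exact: C2_on_expsum.
Qed.

Lemma left_bc_ell j :
  left_bc p c i (ell j) (ell_deriv j) (fun x => 2 * l * ell j x)
  = if j == ord0 then c i else 0.
Proof.
rewrite /left_bc /ell_deriv ellE /expsum mulr0 oppr0 expR0.
transitivity (ellA j * a11 + ellB j * a12); first by rewrite /a11 /a12; ring.
rewrite /ellA /ellB; case: (j == ord0); last by ring.
by rewrite -[RHS](divfK W_neq0) /W; ring.
Qed.

Lemma right_bc_ell j :
  right_bc r q d i (ell j) (ell_deriv j) (fun x => 2 * l * ell j x)
  = if j == ord0 then 0 else d i.
Proof.
rewrite /right_bc /ell_deriv ellE /expsum expRN -/s -/E.
transitivity (ellA j * E * b1 + ellB j / E * b2); first by rewrite /b1 /b2; ring.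
rewrite /ellA /ellB; case: (j == ord0); first by ring.
by rewrite -[RHS](divfK W_neq0) /W; ring.
Qed.

Lemma C2_on_add_ell {F F1 F2 : R -> R} (u0 u1 : R) : C2_on 0 (r i) F F1 F2 ->
  exists G1 G2 : R -> R,
    let G x := F x + (u0 * ell ord0 x + u1 * ell ord_max x) in
    [/\ C2_on 0 (r i) G G1 G2,
        left_bc p c i G G1 G2 = left_bc p c i F F1 F2 + c i * u0,
        right_bc r q d i G G1 G2 = right_bc r q d i F F1 F2 + d i * u1 &
        forall x, G2 x = F2 x + 2 * l * (u0 * ell ord0 x + u1 * ell ord_max x)].
Proof.
move=> F_C2.
exists (fun x => F1 x + (u0 * ell_deriv ord0 x + u1 * ell_deriv ord_max x)).
exists (fun x => F2 x + (u0 * (2 * l * ell ord0 x) + u1 * (2 * l * ell ord_max x))).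
split.
- exact: C2_onD F_C2 (C2_onD (C2_onZ u0 (C2_on_ell _ _ _)) (C2_onZ u1 (C2_on_ell _ _ _))).
- transitivity (left_bc p c i F F1 F2
    + u0 * left_bc p c i (ell ord0) (ell_deriv ord0) (fun x => 2 * l * ell ord0 x)
    + u1 * left_bc p c i (ell ord_max) (ell_deriv ord_max)
             (fun x => 2 * l * ell ord_max x)).
    by rewrite /left_bc; ring.
  by rewrite !left_bc_ell /=; ring.
- transitivity (right_bc r q d i F F1 F2
    + u0 * right_bc r q d i (ell ord0) (ell_deriv ord0) (fun x => 2 * l * ell ord0 x)
    + u1 * right_bc r q d i (ell ord_max) (ell_deriv ord_max)
             (fun x => 2 * l * ell ord_max x)).
    by rewrite /right_bc; ring.
  by rewrite !right_bc_ell /=; ring.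
- by move=> x; ring.
Qed.

Let exp_bounds x : 0 <= x <= r i -> 1 <= expR (s * x) <= E.
Proof.
case/andP=> x0 xr; rewrite -expR0 !ler_expR.
by rewrite mulr_ge0 ?ler_pM2l ?(ltW s_gt0).
Qed.

Lemma ell_ge0 j x : 0 <= x <= r i -> 0 <= ell j x.
Proof.
move=> /exp_bounds/andP[y1 yE].
move: l_gt0 c_gt0 d_gt0 p01 q01 s_gt0 E_gt1 W_lt0.
move=> l0 c0 d0 /andP[p0 p1] /andP[q0 q1] s0 E1 W0.
have sp : 0 <= s * (1 - p i) by apply: mulr_ge0; lra.
have sq : 0 <= s * (1 - q i) by apply: mulr_ge0; lra.
rewrite ellE /expsum expRN /ellA /ellB; set y := expR (s * x) in y1 yE *.
case: (j == ord0).
- have -> : c i / W * (E^-1 * b2) * y + - (c i / W * (E * b1)) / y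
      = c i * (b1 * E ^+ 2 - b2 * y ^+ 2) / (- W * E * y).
    by field; rewrite W_neq0 E_neq0 gt_eqF //; lra.
  apply: divr_ge0; last by rewrite !mulr_ge0 //; lra.
  apply: mulr_ge0; first lra.
  have b_le : b2 <= b1 by rewrite /b1 /b2; lra.
  have : y ^+ 2 <= E ^+ 2 by rewrite lerXn2r ?nnegrE //; lra.
  have : 0 < b1 by rewrite /b1; nra.
  nra.
- have -> : - (d i / W * a12) * y + d i / W * a11 / y
      = d i * (a12 * y ^+ 2 - a11) / (- W * y).
    by field; rewrite W_neq0 gt_eqF //; lra.
  apply: divr_ge0; last by rewrite !mulr_ge0 //; lra.
  apply: mulr_ge0; first lra.
  have a_le : a11 <= a12 by rewrite /a11 /a12; lra.
  have : 1 <= y ^+ 2 by rewrite exprn_ege1 //.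
  have : 0 < a12 by rewrite /a12; nra.
  nra.
Qed.

(* numerator of 1 - (ell^{i,1} + ell^{i,2}) at an end point; the two ends are exchanged by
   (p, c) <-> (q, d) *)
Let gap (t t' e : R) :=
  2 * l * t * ((2 * l * t' + e) * (E ^+ 2 - 1) + s * (1 - t') * (E ^+ 2 + 1))
  + s * (1 - t) * (2 * l * t' * (E ^+ 2 + 1) + e * (E - 1) ^+ 2
                   + s * (1 - t') * (E ^+ 2 - 1)).

Let gap_gt0 t t' e : 0 <= t <= 1 -> 0 <= t' <= 1 -> 0 < e -> 0 < gap t t' e.
Proof.
move: l_gt0 s_gt0 E_gt1 => l0 s0 E1 /andP[t0 t1] /andP[t'0 t'1] e0.
have E2 : 0 < E ^+ 2 - 1 by nra.
have lt' : 0 <= l * t' by apply: mulr_ge0; lra.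
have st' : 0 <= s * (1 - t') by apply: mulr_ge0; lra.
pose X := (2 * l * t' + e) * (E ^+ 2 - 1) + s * (1 - t') * (E ^+ 2 + 1).
pose Y := 2 * l * t' * (E ^+ 2 + 1) + e * (E - 1) ^+ 2 + s * (1 - t') * (E ^+ 2 - 1).
have X0 : 0 < 2 * l * X.
  have : 0 <= s * (1 - t') * (E ^+ 2 + 1) by apply: mulr_ge0; nra.
  have : 0 < (2 * l * t' + e) * (E ^+ 2 - 1) by apply: mulr_gt0; lra.
  by rewrite /X; nra.
have Y0 : 0 < s * Y.
  have : 0 <= 2 * l * t' * (E ^+ 2 + 1) by apply: mulr_ge0; nra.
  have : 0 < e * (E - 1) ^+ 2 by apply: mulr_gt0; nra.
  have : 0 <= s * (1 - t') * (E ^+ 2 - 1) by apply: mulr_ge0; nra.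
  by rewrite /Y; nra.
have -> : gap t t' e = t * (2 * l * X) + (1 - t) * (s * Y) by rewrite /gap /X /Y; ring.
have [t_gt0|t_le0] := ltrP 0 t.
  by have := mulr_gt0 t_gt0 X0; have := mulr_ge0 (ltW Y0) (_ : 0 <= 1 - t); nra.
have -> : t = 0 by lra.
by rewrite mul0r add0r subr0 mul1r.
Qed.

Let WE_lt0 : W * E < 0.
Proof. by rewrite pmulr_llt0 ?W_lt0 // (lt_trans ltr01 E_gt1). Qed.

Let ell_sum_left : ell ord0 0 + ell ord_max 0 = 1 + gap (p i) (q i) (d i) / (W * E).
Proof.
apply: (mulIf (ltr0_neq0 WE_lt0)); rewrite [RHS]mulrDl mul1r divfK ?ltr0_neq0 //.
rewrite !ellE /expsum mulr0 oppr0 expR0 /ellA /ellB /=.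
transitivity (c i * (E^-1 * b2 - E * b1) * E + d i * (a11 - a12) * E).
  by field; rewrite E_neq0 W_neq0.
by rewrite /W /gap /a11 /a12 /b1 /b2 /=; field.
Qed.

Let ell_sum_right :
  ell ord0 (r i) + ell ord_max (r i) = 1 + gap (q i) (p i) (c i) / (W * E).
Proof.
apply: (mulIf (ltr0_neq0 WE_lt0)); rewrite [RHS]mulrDl mul1r divfK ?ltr0_neq0 //.
rewrite !ellE /expsum expRN -/E /ellA /ellB /=.
transitivity (c i * (b2 - b1) * E + d i * (a11 - a12 * E ^+ 2)).
  by field; rewrite E_neq0 W_neq0.
by rewrite /W /gap /a11 /a12 /b1 /b2 /=; field.
Qed.

Lemma ell_sum_bounded : exists2 θ : R, 0 <= θ < 1 &
  forall x, 0 <= x <= r i -> ell ord0 x + ell ord_max x <= θ.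
Proof.
pose P := ellA ord0 + ellA ord_max; pose Q := ellB ord0 + ellB ord_max.
have ell_sumE x : ell ord0 x + ell ord_max x = P * expR (s * x) + Q / expR (s * x).
  by rewrite !ellE /expsum expRN /P /Q; ring.
have gap_lt0 t t' e : 0 <= t <= 1 -> 0 <= t' <= 1 -> 0 < e ->
    1 + gap t t' e / (W * E) < 1.
  by move=> t01 t'01 e0; rewrite gtrDl pmulr_rlt0 ?gap_gt0 // invr_lt0.
exists (Num.max (Num.max (P + Q) (P * E + Q / E)) 0); last first.
  by move=> x /exp_bounds yb; rewrite ell_sumE; exact: hyperbola_le_max_endpoints.
have left_lt1 : P + Q < 1.
  by move: (ell_sumE 0); rewrite mulr0 expR0 mulr1 divr1 ell_sum_left => <-; exact: gap_lt0.
have right_lt1 : P * E + Q / E < 1.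
  by move: (ell_sumE (r i)); rewrite -/E ell_sum_right => <-; exact: gap_lt0.
by rewrite le_max lexx orbT /= !gt_max left_lt1 right_lt1 ltr01.
Qed.

End Edge.

Section Concatenation.
Context {R : realType} {N : nat} (r p q c d : 'I_N -> R)
  (P : 'I_N -> 'I_2 -> 'I_N -> {measure set R -> \bar R})
  (Rr : R -> 'I_N -> (R -> R) -> R -> R) (l : R).
Hypotheses (l_gt0 : 0 < l) (r_gt0 : forall i, 0 < r i)
  (p01 : forall i, 0 <= p i <= 1) (q01 : forall i, 0 <= q i <= 1)
  (c_gt0 : forall i, 0 < c i) (d_gt0 : forall i, 0 < d i)
  (P_subprob : forall i j, subprobS r (P i j))
  (Rr_resolvent : forall i, is_resolvent_i r p q c d l i (Rr l i)).

Local Notation ell := (ell r p q c d l).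
Local Notation ellS := (ellS r p q c d l).
Local Notation intS := (Defs.intS r).
Local Notation Rdu := (Rdu Rr l).
Local Notation Rco := (Rco r p q c d P Rr l).
Local Notation coeff := (coeff r p q c d P Rr l).
Local Notation coeff_system := (coeff_system r p q c d P Rr l).

Let P_integrable i j := subprobS_integrable (P_subprob i j).

Lemma within_continuous_ell k m : {within `[0, r k], continuous (ell k m)}.
Proof. exact/continuous_subspaceT/continuous_ell. Qed.

Lemma ellS_sum (u : 'I_N -> 'I_2 -> R) k x :
  \sum_(i < N) \sum_(j < 2) u i j * ellS i j k x
  = u k ord0 * ell k ord0 x + u k ord_max * ell k ord_max x.
Proof.
rewrite (bigD1 k) //= big_ord2 /Defs.ellS !eqxx big1 ?addr0 // => i /negbTE ik.
by apply: big1 => j _; rewrite eq_sym ik mulr0.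
Qed.

Lemma RcoE g : Rco g = fun k x =>
  Rdu g k x + (coeff g k ord0 * ell k ord0 x + coeff g k ord_max * ell k ord_max x).
Proof. by apply/funext => k; apply/funext => x; rewrite /Defs.Rco ellS_sum. Qed.

Definition ell_moment i j k m : R := \int[P i j k]_(x in `[0, r k]) ell k m x.

Lemma intS_ellS i j k m : intS (P i j) (ellS k m) = ell_moment i j k m.
Proof.
rewrite /Defs.intS (bigD1 k) //= /Defs.ellS eqxx big1 ?addr0 // => k' /negbTE->.
by rewrite Rintegral_cst // mul0r.
Qed.

Lemma intS_add_ell i j (F : 'I_N -> R -> R) (u : 'I_N -> 'I_2 -> R) :
  (forall k, {within `[0, r k], continuous (F k)}) ->
  intS (P i j) (fun k x => F k x + (u k ord0 * ell k ord0 x + u k ord_max * ell k ord_max x))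
  = intS (P i j) F + \sum_k \sum_m u k m * intS (P i j) (ellS k m).
Proof.
move=> F_cont; under eq_bigr do under eq_bigr do rewrite intS_ellS.
rewrite /Defs.intS -big_split /=.
apply: eq_bigr => k _; rewrite big_ord2 /ell_moment.
have ellZ_cont m a : {within `[0, r k], continuous (fun x => a * ell k m x)}.
  exact/within_continuous_mull/within_continuous_ell.
rewrite RintegralD ?P_integrable //; last first.
  exact: within_continuousD (ellZ_cont _ _) (ellZ_cont _ _).
rewrite RintegralD ?P_integrable //.
by rewrite (RintegralZl (u k ord0)) ?(RintegralZl (u k ord_max)) //;
  apply: P_integrable; exact: within_continuous_ell.
Qed.

Lemma ell_moment_ge0 i j k m : 0 <= ell_moment i j k m.
Proof.
apply: Rintegral_ge0 => x; rewrite /= in_itv /= => xr.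
exact: ell_ge0 l_gt0 (r_gt0 k) (p01 k) (q01 k) (c_gt0 k) (d_gt0 k) m x xr.
Qed.

Lemma ell_sum_uniformly_bounded : exists2 θ : R, 0 <= θ < 1 &
  forall k x, 0 <= x <= r k -> ell k ord0 x + ell k ord_max x <= θ.
Proof.
have [θ θ01 θ_bound] := fin_all_exists2 (fun k =>
  ell_sum_bounded l_gt0 (r_gt0 k) (p01 k) (q01 k) (c_gt0 k) (d_gt0 k)).
exists (\big[Num.max/0]_k θ k).
  rewrite bigmax_ge_id /=; apply/bigmax_ltP; split=> // k _.
  by case/andP: (θ01 k).
by move=> k x xr; apply: le_trans (θ_bound k x xr) (le_bigmax _ _ k).
Qed.

Lemma ell_moment_row_lt1 i j : \sum_k \sum_m ell_moment i j k m < 1.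
Proof.
have [θ /andP[θ0 θ1] θ_bound] := ell_sum_uniformly_bounded.
apply: le_lt_trans θ1; apply: le_trans (ler_piMr θ0 (subprobS_itv_mass_le1 (P_subprob i j))).
rewrite mulr_sumr; apply: ler_sum => k _.
rewrite big_ord2 /ell_moment -RintegralD ?P_integrable //; [|exact: within_continuous_ell..].
rewrite -Rintegral_cst //; apply: le_Rintegral => //.
- exact/P_integrable/within_continuousD/within_continuous_ell/within_continuous_ell.
- exact/P_integrable/continuous_subspaceT/cst_continuous.
- by move=> x; rewrite /= in_itv /=; exact: θ_bound.
Qed.

Lemma moment_fixpoint_eq0 (v : 'I_N * 'I_2 -> R) :
  (forall t, v t = \sum_s ell_moment t.1 t.2 s.1 s.2 * v s) -> forall t, v t = 0.
Proof.
apply: substochastic_fixpoint_eq0 => [t s|t]; first exact: ell_moment_ge0.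
by rewrite -(pair_bigA _ (ell_moment t.1 t.2)); exact: ell_moment_row_lt1.
Qed.

Lemma coeff_systemE g u : coeff_system g u <->
  forall t, u t.1 t.2 = intS (P t.1 t.2) (Rdu g)
                        + \sum_s ell_moment t.1 t.2 s.1 s.2 * u s.1 s.2.
Proof.
have sumE i j : \sum_k \sum_m u k m * intS (P i j) (ellS k m)
    = \sum_s ell_moment i j s.1 s.2 * u s.1 s.2.
  rewrite -(pair_bigA _ (fun k m => ell_moment i j k m * u k m)).
  by apply: eq_bigr => k _; apply: eq_bigr => m _; rewrite intS_ellS mulrC.
by split=> [hu [i j]|hu i j]; [rewrite -sumE; exact: hu | rewrite sumE; exact: hu (i, j)].
Qed.

Lemma coeff_system_unique g u v : coeff_system g u -> coeff_system g v ->
  forall i j, u i j = v i j.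
Proof.
move=> /coeff_systemE hu /coeff_systemE hv i j; apply/eqP; rewrite -subr_eq0; apply/eqP.
apply: (moment_fixpoint_eq0 (fun t => u t.1 t.2 - v t.1 t.2) _ (i, j)) => t.
rewrite hu hv opprD addrACA subrr add0r -sumrB.
by apply: eq_bigr => s _; rewrite mulrBr.
Qed.

Lemma coeff_system_solvable g : exists u, coeff_system g u.
Proof.
have [w hw] := affine_fixpoint_exists (fun t s => ell_moment t.1 t.2 s.1 s.2)
  (fun t => intS (P t.1 t.2) (Rdu g)) moment_fixpoint_eq0.
exists (fun i j => w (i, j)); apply/coeff_systemE => -[i j].
by rewrite /= hw; congr (_ + _); apply: eq_bigr => -[k m].
Qed.

Lemma coeffP g : coeff_system g (coeff g).
Proof. by rewrite /Defs.coeff; apply: epsilon_spec; exact: coeff_system_solvable. Qed.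

Lemma coeff_eq {g u} : coeff_system g u -> forall i j, coeff g i j = u i j.
Proof. exact/coeff_system_unique/coeffP. Qed.

Lemma Rco_graphA g : contS r g ->
  graphA r p q c d P (Rco g) (fun i x => l * Rco g i x - g i x).
Proof.
move=> g_cont.
have Rdu_graph k : graphAi r p q c d k (Rdu g k) (fun x => l * Rdu g k x - g k x).
  exact: (Rr_resolvent k).1 (g k) (g_cont k).
have Rdu_cont k : {within `[0, r k], continuous (Rdu g k)}.
  by have [? [? [[]]]] := Rdu_graph k.
have intS_Rco i j : intS (P i j) (Rco g) = coeff g i j.
  by rewrite [in LHS]RcoE intS_add_ell // -coeffP.
move=> i; have [F1 [F2 [F_C2 F_left F_right F2E]]] := Rdu_graph i.
have [G1 [G2 /= [G_C2 G_left G_right G2E]]] :=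
  C2_on_add_ell l_gt0 (r_gt0 i) (p01 i) (q01 i) (c_gt0 i) (d_gt0 i)
    (coeff g i ord0) (coeff g i ord_max) F_C2.
move: G_left G_right; rewrite /left_bc /right_bc F_left F_right !add0r => G_left G_right.
exists G1, G2; rewrite !intS_Rco RcoE /=; split=> // x xr.
by rewrite G2E mulrDr -addrAC (F2E x xr); field.
Qed.

Lemma Rco_left_inverse f h : graphA r p q c d P f h ->
  forall i x, x \in `[0, r i] -> Rco (fun k y => l * f k y - h k y) i x = f i x.
Proof.
move=> f_graph; set g := fun k y => l * f k y - h k y.
pose a i j := intS (P i j) f.
pose phi k y := f k y + (- a k ord0 * ell k ord0 y + - a k ord_max * ell k ord_max y).
have phi_graph k : graphAi r p q c d k (phi k) (fun y => l * phi k y - g k y).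
  have [f1 [f2 [f_C2 f_left f_right f2E]]] := f_graph k.
  have [G1 [G2 /= [G_C2 G_left G_right G2E]]] :=
    C2_on_add_ell l_gt0 (r_gt0 k) (p01 k) (q01 k) (c_gt0 k) (d_gt0 k)
      (- a k ord0) (- a k ord_max) f_C2.
  move: G_left G_right; rewrite /left_bc /right_bc f_left f_right => G_left G_right.
  exists G1, G2; split=> //.
  - by rewrite G_left /a; ring.
  - by rewrite /phi G_right /a; ring.
  - by move=> y yr; rewrite G2E /phi /g (f2E y yr); field.
have Rdu_phi k y : y \in `[0, r k] -> Rdu g k y = phi k y.
  rewrite /Defs.Rdu; apply: (Rr_resolvent k).2 _ _ (phi_graph k) (g k) _ y => z _.
  by rewrite /g; ring.
have Rdu_cont k : {within `[0, r k], continuous (Rdu g k)}.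
  have [? [? [[phi_cont _ _ _ _] _ _ _]]] := phi_graph k.
  apply: subspace_eq_continuous phi_cont => y; rewrite inE /= => yr.
  by symmetry; apply: Rdu_phi.
have a_sys : coeff_system g a.
  move=> i j; rewrite -intS_add_ell //; apply: eq_intS => k y yr.
  by rewrite Rdu_phi // /phi; ring.
move=> i x xr; rewrite RcoE !(coeff_eq a_sys) Rdu_phi // /phi; ring.
Qed.

End Concatenation.

Theorem corollary3 (R : realType) (N : nat) (r p q c d : 'I_N -> R)
  (P : 'I_N -> 'I_2 -> 'I_N -> {measure set R -> \bar R})
  (Rr : R -> 'I_N -> (R -> R) -> R -> R) :
  (0 < N)%N ->
  (forall i, 0 < r i) ->
  (forall i, 0 <= p i <= 1) -> (forall i, 0 <= q i <= 1) ->
  (forall i, 0 < c i) -> (forall i, 0 < d i) ->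
  (forall i j, subprobS r (P i j)) ->
  (forall l, 0 < l -> forall i, is_resolvent_i r p q c d l i (Rr l i)) ->
  forall l, 0 < l ->
    (* range of R^co_l is contained in D(A), and A R^co_l g = l R^co_l g - g *)
    (forall g, contS r g ->
       graphA r p q c d P (Rco r p q c d P Rr l g)
         (fun i x => l * Rco r p q c d P Rr l g i x - g i x)) /\
    (* D(A) is contained in the range of R^co_l, and R^co_l (l f - A f) = f *)
    (forall f h, graphA r p q c d P f h ->
       forall i x, x \in `[0, r i] ->
         Rco r p q c d P Rr l (fun k y => l * f k y - h k y) i x = f i x).
Proof.
move=> _ r_gt0 p01 q01 c_gt0 d_gt0 P_subprob Rr_resolvent l l_gt0.
have Rr_l := Rr_resolvent l l_gt0.
by split; [exact: Rco_graphA | exact: Rco_left_inverse].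
Qed.
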